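(* Let $r,s,t,\ell,m$ be integers with $1 \le t \le \ell \le m$, $1 \le r < \ell$ and $1 \le s \le t$. Then $$\mathfrak w_r^{(s)}(t;\ell,m)=q^t\,\mathfrak w^{(s)}_r(t;\ell-1,m)+(q^m-q^{t-1})\,\mathfrak w^{(s)}_r(t-1;\ell-1,m)$$ and $$\mathfrak w_r(t;\ell,m)=q^t\,\mathfrak w_r(t;\ell-1,m)+(q^m-q^{t-1})\,\mathfrak w_r(t-1;\ell-1,m).$$
   Context: $q$ is a prime power. For an $a\times b$ matrix $M=(m_{ij})$ over $\mathbb{F}_q$ and $1\le r\le a$, $\tau_r(M)=m_{11}+\cdots+m_{rr}$ and $\underline{M}_r$ is the $r\times b$ matrix of the first $r$ rows of $M$. For integers $t\ge 0$ and $s\ge 1$, $\mathfrak w_r(t;a,b)$ is the number of $a\times b$ matrices $M$ over $\mathbb{F}_q$ with $\mathrm{rk}(M)=t$ and $\tau_r(M)\ne0$, and $\mathfrak w^{(s)}_r(t;a,b)$ is the number of such matrices that additionally satisfy $\mathrm{rk}(\underline{M}_r)=s$ (these counts are $0$ when no such matrices exist, e.g. when $t=0$ or $t>\min(a,b)$). *)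

From HB Require Import structures.
From mathcomp Require Import all_boot all_order all_algebra all_fingroup all_field.
Set Implicit Arguments. Unset Strict Implicit. Unset Printing Implicit Defensive.
Import GRing.Theory.
Local Open Scope ring_scope.

Definition tau (F : finFieldType) (r : nat) (a b : nat) (M : 'M[F]_(a, b)) : F :=
  \sum_(i : 'I_a) \sum_(j : 'I_b)
     (if ((i : nat) == (j : nat)) && (i < r)%N then M i j else 0).

(* The r x b matrix of the first r rows of M (meaningful for r <= a). *)
Definition first_rows (F : finFieldType) (r : nat) (a b : nat) (M : 'M[F]_(a, b))
  : 'M[F]_(r, b) :=
  \matrix_(i < r, j < b)
     (match @insub nat (fun k => k < a)%N 'I_a (val i) with
      | Some i' => M i' j
      | None => 0
      end).

Definition wcount (F : finFieldType) (r t a b : nat) : nat :=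
  #|[set M : 'M[F]_(a, b) | (\rank M == t) && (tau r M != 0)]|.

Definition wcount_s (F : finFieldType) (r s t a b : nat) : nat :=
  #|[set M : 'M[F]_(a, b) |
       [&& \rank M == t, tau r M != 0 & \rank (first_rows r M) == s]]|.

From HB Require Import structures.
From mathcomp Require Import all_boot all_order all_algebra all_fingroup all_field.
From mathcomp Require Import mxabelem.
Set Implicit Arguments. Unset Strict Implicit. Unset Printing Implicit Defensive.

(* Deleting the last row of an l x m matrix M leaves its first l - 1 rows A,
   which (as r < l) already determine tau_r(M) and the first r rows of M.
   For a fixed A of rank k, the deleted row v keeps the rank equal to k when it
   lies in the row space of A (q^k choices) and raises it to k + 1 otherwise
   (q^m - q^k choices).  Summing over A, for any property Q of the first l - 1
   rows, the rank-t matrices M satisfying Q number q^t times the rank-t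
   matrices A satisfying Q plus (q^m - q^(t-1)) times the rank-(t-1) ones;
   both identities are instances of this count. *)

Section RankColRow.
Variables (F : fieldType) (n m : nat).

Lemma mxrank_col_mx_row (A : 'M[F]_(n, m)) (v : 'rV[F]_m) :
  \rank (col_mx A v) = \rank A + ~~ (v <= A)%MS.
Proof.
rewrite -addsmxE; have [vA | vNA] := boolP (v <= A)%MS.
  by rewrite (addsmx_idPl vA) addn0.
apply/eqP; rewrite eqn_leq; apply/andP; split.
  apply: leq_trans (mxrank_adds_leqif A v) _.
  by rewrite leq_add2l rank_leq_row.
rewrite addn1; apply: rank_ltmx; rewrite ltmxE addsmxSl /=.
by apply: contra vNA => /(submx_trans (addsmxSr A v)).
Qed.

End RankColRow.

Section RowExtensions.
Variables (F : finFieldType) (n m : nat).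

Lemma card_rank_col_mx_row (A : 'M[F]_(n, m)) (k : nat) :
  #|[set v : 'rV[F]_m | \rank (col_mx A v) == k]| =
  (\rank A == k) * #|F| ^ \rank A
  + ((\rank A).+1 == k) * (#|F| ^ m - #|F| ^ \rank A).
Proof.
rewrite -sum1dep_card big_mkcond (bigID (mem (rowg A))) /=; congr (_ + _).
  rewrite -card_rowg mulnC -sum_nat_const; apply: eq_bigr => v.
  by rewrite inE => vA; rewrite mxrank_col_mx_row vA addn0.
have card_rowgC : #|~: rowg A| = #|F| ^ m - #|F| ^ \rank A.
  by have := cardsC (rowg A); rewrite card_mx mul1n card_rowg => <-; rewrite addKn.
rewrite -card_rowgC mulnC -sum_nat_const; apply: eq_big => v; first by rewrite in_setC.
by rewrite inE => /negPf vNA; rewrite mxrank_col_mx_row vNA addn1.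
Qed.

End RowExtensions.

Section FirstRows.
Variable F : finFieldType.

Definition mx_entry a b (M : 'M[F]_(a, b)) (k : nat) (j : 'I_b) : F :=
  if @insub nat (fun k => k < a) 'I_a k is Some i then M i j else 0%R.

Lemma mx_entry_ord a b (M : 'M[F]_(a, b)) (i : 'I_a) j : mx_entry M i j = M i j.
Proof. by rewrite /mx_entry valK. Qed.

Lemma first_rowsE a b r (M : 'M[F]_(a, b)) (i : 'I_r) j :
  first_rows r M i j = mx_entry M i j.
Proof. by rewrite mxE. Qed.

Lemma mx_entry_first_rows a b n (M : 'M[F]_(a, b)) k j :
  k < n -> mx_entry (first_rows n M) k j = mx_entry M k j.
Proof. by move=> kn; rewrite /mx_entry insubT /= first_rowsE. Qed.

Lemma first_rows_first_rows a b r n (M : 'M[F]_(a, b)) :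
  r <= n -> first_rows r (first_rows n M) = first_rows r M.
Proof.
move=> rn; apply/matrixP => i j.
by rewrite !first_rowsE mx_entry_first_rows // (leq_trans (ltn_ord i) rn).
Qed.

Lemma tau_mx_entry a b r (M : 'M[F]_(a, b)) : r <= a ->
  tau r M = (\sum_(i < r) \sum_(j : 'I_b) if i == j :> nat then mx_entry M i j else 0)%R.
Proof.
move=> ra; rewrite (big_ord_widen_cond _ xpredT
  (fun i => \sum_(j : 'I_b) if i == j :> nat then mx_entry M i j else 0)%R ra).
rewrite big_mkcond /tau; apply: eq_bigr => i _ /=.
case: ltnP => ir; last by apply: big1 => j _; rewrite andbF.
by apply: eq_bigr => j _; rewrite andbT mx_entry_ord.
Qed.

Lemma tau_first_rows a b r n (M : 'M[F]_(a, b)) : r <= n -> n <= a ->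
  tau r (first_rows n M) = tau r M.
Proof.
move=> rn na; rewrite !tau_mx_entry //; last exact: leq_trans na.
apply: eq_bigr => i _; apply: eq_bigr => j _.
by rewrite mx_entry_first_rows // (leq_trans (ltn_ord i) rn).
Qed.

End FirstRows.

Section LastRow.
Variables (F : finFieldType) (n m : nat).

Definition join_last_row (x : 'M[F]_(n, m) * 'rV[F]_m) : 'M[F]_(n.+1, m) :=
  castmx (addn1 n, erefl m) (col_mx x.1 x.2).

Definition split_last_row (M : 'M[F]_(n.+1, m)) : 'M[F]_(n, m) * 'rV[F]_m :=
  (first_rows n M, row ord_max M).

Lemma join_last_rowK : cancel join_last_row split_last_row.
Proof.
case=> A v; congr pair; apply/matrixP => i j.
  rewrite first_rowsE /mx_entry insubT; first exact: ltnW (ltn_ord i).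
  move=> lt_i; rewrite castmxE /= cast_ord_id.
  have -> : cast_ord (esym (addn1 n)) (Sub (val i) lt_i) = lshift 1 i by exact: val_inj.
  by rewrite col_mxEu.
rewrite mxE castmxE /= cast_ord_id.
have -> : cast_ord (esym (addn1 n)) ord_max = rshift n i.
  by apply: val_inj; rewrite /= ord1 addn0.
by rewrite col_mxEd.
Qed.

Lemma split_last_rowK : cancel split_last_row join_last_row.
Proof.
move=> M; apply/matrixP => i j; rewrite castmxE /= cast_ord_id mxE.
case: splitP => k /= ik.
  rewrite first_rowsE /mx_entry insubT; first exact: ltnW (ltn_ord k).
  by move=> lt_k; congr (M _ j); apply: val_inj.
by rewrite mxE; congr (M _ j); apply: val_inj; rewrite /= ik ord1 addn0.
Qed.

Lemma mxrank_join_last_row x : \rank (join_last_row x) = \rank (col_mx x.1 x.2).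
Proof. by rewrite /join_last_row eqmx_cast. Qed.

Lemma first_rows_join_last_row x : first_rows n (join_last_row x) = x.1.
Proof. exact: (congr1 fst (join_last_rowK x)). Qed.

Lemma card_rank_first_rows (Q : pred 'M[F]_(n, m)) (t : nat) :
  #|[set M : 'M[F]_(n.+1, m) | (\rank M == t.+1) && Q (first_rows n M)]| =
  #|F| ^ t.+1 * #|[set A | (\rank A == t.+1) && Q A]|
  + (#|F| ^ m - #|F| ^ t) * #|[set A | (\rank A == t) && Q A]|.
Proof.
set S := [set M : 'M[F]_(n.+1, m) | _].
rewrite -(card_imset _ (can_inj split_last_rowK)).
rewrite (can2_imset_pre _ split_last_rowK join_last_rowK).
transitivity (\sum_(A : 'M[F]_(n, m)) \sum_(v : 'rV[F]_m)
                ((A, v) \in join_last_row @^-1: S : nat)).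
  by rewrite pair_big -sum1_card big_mkcond; apply: eq_big => // -[].
rewrite -!sum1dep_card !(big_mkcond (fun A => _ && _)) !big_distrr -big_split /=.
apply: eq_bigr => A _.
have -> : \sum_(v : 'rV[F]_m) ((A, v) \in join_last_row @^-1: S : nat) =
          Q A * #|[set v : 'rV[F]_m | \rank (col_mx A v) == t.+1]|.
  rewrite -sum1dep_card big_distrr [RHS]big_mkcond /=; apply: eq_bigr => v _.
  rewrite !inE mxrank_join_last_row first_rows_join_last_row /=.
  by case: (_ == _); case: (Q A).
rewrite (card_rank_col_mx_row A t.+1) eqSS.
case: (Q A); last by rewrite !andbF !muln0.
rewrite !andbT mul1n.
have [-> | _] := eqVneq (\rank A) t.
  by rewrite ltn_eqF //= mul0n add0n muln0 add0n mul1n muln1.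
have [-> | _] := eqVneq (\rank A) t.+1; last by rewrite !muln0.
by rewrite /= mul1n muln1 !muln0 !addn0.
Qed.

End LastRow.

Theorem mainTheorem14 (F : finFieldType) (r s t l m : nat) :
  (1 <= t)%N -> (t <= l)%N -> (l <= m)%N -> (1 <= r)%N -> (r < l)%N ->
  (1 <= s)%N -> (s <= t)%N ->
  wcount_s F r s t l m =
    (#|F| ^ t * wcount_s F r s t l.-1 m
     + (#|F| ^ m - #|F| ^ t.-1) * wcount_s F r s t.-1 l.-1 m)%N
  /\
  wcount F r t l m =
    (#|F| ^ t * wcount F r t l.-1 m
     + (#|F| ^ m - #|F| ^ t.-1) * wcount F r t.-1 l.-1 m)%N.
Proof.
move=> t_gt0 _ _ _ lt_r_l _ _.
case: t t_gt0 => // t _; case: l lt_r_l => // n; rewrite ltnS /= => le_r_n.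
have tau_first (M : 'M[F]_(n.+1, m)) : tau r (first_rows n M) = tau r M.
  exact: tau_first_rows.
split.
  rewrite /wcount_s -(card_rank_first_rows
    (fun A => (tau r A != 0%R) && (\rank (first_rows r A) == s))).
  by apply: eq_card => M; rewrite !inE /= tau_first first_rows_first_rows.
rewrite /wcount -(card_rank_first_rows (fun A => tau r A != 0%R)).
by apply: eq_card => M; rewrite !inE /= tau_first.
Qed.
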